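(* Fix a sequence of matchings and any non-negative load vector at the end of round $t_1$, and let $\mathcal{B}$ be an arbitrary subset of the tokens. Then for any subset of nodes $D \subseteq V$ and any round $t_2 > t_1$, \[ \Pr\Big[ \bigwedge_{i \in \mathcal{B}} \big(w_i^{(t_2)} \in D\big) \Big] \leq \prod_{i\in\mathcal{B}}\mathbf{M}_{w_i^{(t_1)},D}^{[t_1+1,t_2]} = \prod_{i \in \mathcal{B}} \Pr\big[ w_i^{(t_2)} \in D \big]. \]
   Context: $G=(V,E)$ has $n$ nodes; a matching $\mathbf{M}^{(t)}\subseteq E$ is identified with the symmetric matrix with entries $1/2$ on $(u,u),(v,v),(u,v),(v,u)$ for $\{u,v\}\in\mathbf{M}^{(t)}$, $1$ on the diagonal for unmatched nodes, $0$ elsewhere; $\mathbf{M}^{[a,b]}=\prod_{s=a}^b\mathbf{M}^{(s)}$ (identity if $a>b$), and $\mathbf{M}_{u,D}=\sum_{v\in D}\mathbf{M}_{u,v}$. Token-based description of the discrete protocol: tokens are distinguishable; $w^{(t)}_i$ is the node holding token $i$ at the end of round $t$, $x^{(t)}_u$ the number of tokens at $u$. If $u,v$ are matched in round $t$, all tokens at $u$ and $v$ are put in an urn; with probability $1/2$ node $u$ draws $\lceil (x^{(t-1)}_u+x^{(t-1)}_v)/2\rceil$ tokens uniformly at random without replacement, otherwise $\lfloor (x^{(t-1)}_u+x^{(t-1)}_v)/2\rfloor$ (independently over matched edges and rounds); $v$ gets the rest. Unmatched nodes keep their tokens. *)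

From mathcomp Require Import all_boot all_order all_algebra.
Set Implicit Arguments. Unset Strict Implicit. Unset Printing Implicit Defensive.
Import Order.TTheory GRing.Theory Num.Theory.
Local Open Scope ring_scope.

(* Nodes are 'I_n; the graph G is a symmetric irreflexive relation on 'I_n.
   A matching is encoded by its "mate" function: mate u = v if {u,v} is a
   matched edge, mate u = u if u is unmatched. *)
Definition is_matching (n : nat) (G : rel 'I_n) (mate : {ffun 'I_n -> 'I_n}) :=
  forall u : 'I_n, mate (mate u) = u /\ (mate u != u -> G u (mate u)).

Definition is_graph (n : nat) (G : rel 'I_n) :=
  irreflexive G /\ symmetric G.

Definition match_mx (R : fieldType) (n : nat) (mate : {ffun 'I_n -> 'I_n}) : 'M[R]_n :=
  \matrix_(u, v)
    (if mate u == u then (u == v)%:R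
     else if (v == u) || (v == mate u) then 2%:R^-1 else 0).

Definition match_prod (R : fieldType) (n : nat) (Ms : nat -> {ffun 'I_n -> 'I_n})
  (a b : nat) : 'M[R]_n :=
  \big[mulmx/1%:M]_(a <= s < b.+1) match_mx R (Ms s).

Definition mx_row_set (R : fieldType) (n : nat) (A : 'M[R]_n) (u : 'I_n) (D : {set 'I_n}) : R :=
  \sum_(v in D) A u v.

(* Token configurations: w i = node holding token i. *)
Definition config (m n : nat) := {ffun 'I_m -> 'I_n}.

(* Probability that the tokens on the matched edge {u, mate u} are split as
   in w' starting from w: u receives a uniformly random subset of the urn of
   size ceil(k/2) w.p. 1/2 and of size floor(k/2) w.p. 1/2. *)
Definition edge_prob (R : realFieldType) (m n : nat) (mate : {ffun 'I_n -> 'I_n})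
  (w w' : config m n) (u : 'I_n) : R :=
  let S := [set i | (w i == u) || (w i == mate u)] in
  let k := #|S| in
  let a := #|[set i in S | w' i == u]| in
  (a == uphalf k)%:R / 2%:R / ('C(k, uphalf k))%:R
  + (a == k./2)%:R / 2%:R / ('C(k, k./2))%:R.

Definition step_prob (R : realFieldType) (m n : nat) (mate : {ffun 'I_n -> 'I_n})
  (w w' : config m n) : R :=
  if [forall i, (w' i == w i) || (w' i == mate (w i))] then
    \prod_(u : 'I_n | (u < mate u)%N) edge_prob R mate w w' u
  else 0.

(* Distribution of the configuration at the end of round t1 + k, given the
   configuration w0 at the end of round t1 (rounds independent). *)
Fixpoint proc_dist (R : realFieldType) (m n : nat) (Ms : nat -> {ffun 'I_n -> 'I_n})
  (t1 k : nat) (w0 : config m n) : {ffun config m n -> R} :=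
  match k with
  | 0 => [ffun w => (w == w0)%:R]
  | k'.+1 => [ffun w' => \sum_(w : config m n)
                 proc_dist R Ms t1 k' w0 w * step_prob R (Ms (t1 + k)%N) w w']
  end.

Definition Pr_at (R : realFieldType) (m n : nat) (Ms : nat -> {ffun 'I_n -> 'I_n})
  (t1 t2 : nat) (w0 : config m n) (E : pred (config m n)) : R :=
  \sum_(w : config m n | E w) proc_dist R Ms t1 (t2 - t1) w0 w.

(* Test the configuration against a nonnegative node function v: the expected
   value of prod_{i in B} v(w_i) after round t is at most
   prod_{i in B} (M^[t1+1,t] v)(w_i^(t1)), with equality when |B| <= 1; the
   indicator of D gives the theorem.  Peeling off the last round reduces this to
   a single round, in which distinct matched edges act independently.  On an edge
   {u, u'} carrying k tokens, r of them in B, with a = v u and b = v u', the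
   expected product is the mean over c in {ceil(k/2), floor(k/2)} of
   [X^c] (aX+b)^r (X+1)^(k-r) / C(k,c).  This is at most ((a+b)/2)^r because the
   central coefficients q_c of (aX+b)^r (X+1)^s with r+s = 2c+1 satisfy
   (a-b)(q_{c+1}-q_c) >= 0, which follows from the identity
   (X+1)Q' - (r+s)Q = r(a-b)(aX+b)^(r-1)(X+1)^s. *)

From HB Require Import structures.
From mathcomp Require Import all_boot all_order all_algebra.
From mathcomp Require Import ring lra zify.
Set Implicit Arguments. Unset Strict Implicit. Unset Printing Implicit Defensive.
Import Order.TTheory GRing.Theory Num.Theory.
Local Open Scope ring_scope.

Definition coefs_ge0 (R : numDomainType) (p : {poly R}) := forall i, 0 <= p`_i.

Lemma coefs_ge0M (R : numDomainType) (p q : {poly R}) :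
  coefs_ge0 p -> coefs_ge0 q -> coefs_ge0 (p * q).
Proof.
by move=> p0 q0 i; rewrite coefM; apply: sumr_ge0 => j _; apply: mulr_ge0.
Qed.

Lemma coefs_ge0X (R : numDomainType) (p : {poly R}) k :
  coefs_ge0 p -> coefs_ge0 (p ^+ k).
Proof.
move=> p0; elim: k => [|k IHk] i; first by rewrite expr0 coefC; case: (i == 0)%N.
by rewrite exprS; apply: coefs_ge0M.
Qed.

Section UrnPolynomial.
Variable R : realFieldType.
Implicit Types (a b : R) (q : {poly R}).

Definition token_poly a b : {poly R} := 'X * a%:P + b%:P.

Definition urn_poly a b (r s : nat) : {poly R} :=
  token_poly a b ^+ r * token_poly 1 1 ^+ s.

Lemma coef_token_polyM0 a b q : (token_poly a b * q)`_0 = b * q`_0.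
Proof. by rewrite /token_poly mulrDl -mulrA coefD coefXM /= coefCM add0r. Qed.

Lemma coef_token_polyMS a b q c :
  (token_poly a b * q)`_c.+1 = a * q`_c + b * q`_c.+1.
Proof. by rewrite /token_poly mulrDl -mulrA coefD coefXM !coefCM. Qed.

Lemma coef_token_poly11X k c : (token_poly 1 1 ^+ k)`_c = 'C(k, c)%:R.
Proof.
elim: k c => [|k IHk] c; first by rewrite expr0 coefC; case: c.
rewrite exprS; case: c => [|c]; first by rewrite coef_token_polyM0 IHk mul1r !bin0.
by rewrite coef_token_polyMS !IHk !mul1r binS natrD addrC.
Qed.

Lemma token_poly_ge0 a b : 0 <= a -> 0 <= b -> coefs_ge0 (token_poly a b).
Proof.
move=> a0 b0 [|[|i]]; rewrite -[token_poly a b]mulr1.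
- by rewrite coef_token_polyM0 coefC mulr1.
- by rewrite coef_token_polyMS !coefC mulr1 mulr0 addr0.
- by rewrite coef_token_polyMS !coefC !mulr0 addr0.
Qed.

Lemma urn_poly_ge0 a b r s : 0 <= a -> 0 <= b -> coefs_ge0 (urn_poly a b r s).
Proof.
by move=> a0 b0; apply: coefs_ge0M; apply: coefs_ge0X; apply: token_poly_ge0.
Qed.

Lemma urn_polyS a b r s : urn_poly a b r.+1 s = token_poly a b * urn_poly a b r s.
Proof. by rewrite /urn_poly exprS mulrA. Qed.

Lemma urn_polySs a b r s : urn_poly a b r s.+1 = token_poly 1 1 * urn_poly a b r s.
Proof. by rewrite /urn_poly exprS mulrCA. Qed.

Lemma urn_poly_deriv a b r s :
  token_poly 1 1 * (urn_poly a b r s)^`() - urn_poly a b r s *+ (r + s) =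
  urn_poly a b r.-1 s * (a - b)%:P *+ r.
Proof.
have dT c d : (token_poly c d)^`() = c%:P.
  by rewrite /token_poly derivD derivC derivM derivX derivC mul1r mulr0 !addr0.
rewrite /urn_poly derivM !deriv_exp !dT.
by case: r => [|r]; case: s => [|s] /=; rewrite ?exprS ?expr0 /token_poly polyCB;
  ring.
Qed.

Lemma urn_poly_central_jump a b r s c : (r + s = c.*2.+1)%N ->
  ((urn_poly a b r s)`_c.+1 - (urn_poly a b r s)`_c) *+ c.+1 =
  (urn_poly a b r.-1 s)`_c * (a - b) *+ r.
Proof.
move=> rs.
have := congr1 (fun p : {poly R} => p`_c) (urn_poly_deriv a b r s) => /=.
rewrite coefB !coefMn coefMC rs => <-.
case: c rs => [|c] rs.
  by rewrite coef_token_polyM0 coef_deriv mul1r !mulr1n.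
rewrite coef_token_polyMS !coef_deriv !mul1r.
have -> : (c.+1.*2.+1 = c.+1 + c.+2)%N by lia.
by rewrite mulrnDr mulrnBl; lra.
Qed.

Lemma urn_poly_central_sign a b r s c : 0 <= a -> 0 <= b -> (r + s = c.*2.+1)%N ->
  0 <= (a - b) * ((urn_poly a b r s)`_c.+1 - (urn_poly a b r s)`_c).
Proof.
move=> a0 b0 rs; rewrite -(pmulrn_lge0 _ (ltn0Sn c)) -mulrnAr.
rewrite urn_poly_central_jump // mulrnAr mulrn_wge0 // mulrCA -expr2.
by rewrite mulr_ge0 ?sqr_ge0 ?urn_poly_ge0.
Qed.

Lemma urn_poly_central_le a b h r : 0 <= a -> 0 <= b -> (r <= h.*2)%N ->
  (urn_poly a b r (h.*2 - r))`_h <= 'C(h.*2, h)%:R * ((a + b) / 2) ^+ r.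
Proof.
move=> a0 b0; elim: r => [|r IHr] hr.
  by rewrite subn0 /urn_poly !expr0 mul1r coef_token_poly11X mulr1.
case: h hr IHr => [|h] // hr IHr.
set s := (h.+1.*2 - r.+1)%N.
have rs : (r + s = h.*2.+1)%N by rewrite /s; lia.
have := IHr (ltnW hr).
have -> : (h.+1.*2 - r = s.+1)%N by rewrite /s; lia.
rewrite urn_polySs urn_polyS !coef_token_polyMS !mul1r => IH.
set q0 := (urn_poly a b r s)`_h in IH *; set q1 := (urn_poly a b r s)`_h.+1 in IH *.
have mean_le : a * q0 + b * q1 <= (a + b) / 2 * (q0 + q1).
  by have := urn_poly_central_sign a0 b0 rs; rewrite -/q0 -/q1; nra.
rewrite exprSr mulrA [_ * ((a + b) / 2)]mulrC; apply: le_trans mean_le _.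
by rewrite ler_wpM2l //; lra.
Qed.

Lemma urn_poly_central_eq a b h r : (r <= 1)%N -> (r <= h.*2)%N ->
  (urn_poly a b r (h.*2 - r))`_h = 'C(h.*2, h)%:R * ((a + b) / 2) ^+ r.
Proof.
have central0 k : (urn_poly a b 0 (k.*2 - 0))`_k = 'C(k.*2, k)%:R.
  by rewrite subn0 /urn_poly expr0 mul1r coef_token_poly11X.
case: r => [|[|//]] _ hr; first by rewrite central0 mulr1.
case: h hr => [//|h] _.
have rs : (0 + h.*2.+1 = h.*2.+1)%N by [].
have := urn_poly_central_jump a b rs; rewrite mulr0n => /eqP.
rewrite mulrn_eq0 /= subr_eq0 => /eqP jump.
have := central0 h.+1; rewrite !subn0 urn_polySs coef_token_polyMS !mul1r.
have -> : (h.+1.*2 - 1 = h.*2.+1)%N by lia.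
by rewrite urn_polyS coef_token_polyMS jump => <-; lra.
Qed.

(* Divided by ['C(k, c)], the coefficient of [X^c] in [urn_poly a b r (k - r)] is
   the mean product of the values reached by the [r] marked tokens among [k]
   when [c] of them, drawn uniformly, go to the endpoint of value [a]. *)
Definition edge_mean a b (k r : nat) : R :=
  (urn_poly a b r (k - r))`_(uphalf k) / 2 / 'C(k, uphalf k)%:R +
  (urn_poly a b r (k - r))`_(k./2) / 2 / 'C(k, k./2)%:R.

Lemma leq_uphalf_double k : (k <= (uphalf k).*2)%N.
Proof. by rewrite uphalfK leq_addl. Qed.

Lemma edge_mean_central a b k r : (r <= k)%N ->
  edge_mean a b k r =
  (urn_poly a b r ((uphalf k).*2 - r))`_(uphalf k) / 'C((uphalf k).*2, uphalf k)%:R.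
Proof.
move=> rk; rewrite /edge_mean.
have [h [ek|ek]] : exists h, k = h.*2 \/ k = h.*2.+1.
  exists k./2; case: (odd k) (odd_double_half k) => /= e; [right|left];
  by rewrite -[in LHS]e.
- rewrite ek uphalf_double half_double.
  have C0 : 0 < 'C(h.*2, h)%:R :> R by rewrite ltr0n bin_gt0; lia.
  by field; rewrite lt0r_neq0.
- rewrite ek /= half_double uphalf_double.
  have -> : (h.+1.*2 - r = (h.*2.+1 - r).+1)%N by lia.
  have eC : 'C(h.*2.+1, h.+1) = 'C(h.*2.+1, h).
    by rewrite -bin_sub; [congr 'C(_, _) | ]; lia.
  rewrite urn_polySs coef_token_polyMS !mul1r eC doubleS binS eC.
  have C0 : 0 < 'C(h.*2.+1, h)%:R :> R by rewrite ltr0n bin_gt0; lia.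
  by rewrite natrD; field; rewrite ?lt0r_neq0 ?addr_gt0.
Qed.

Lemma edge_mean_le a b k r : 0 <= a -> 0 <= b -> (r <= k)%N ->
  edge_mean a b k r <= ((a + b) / 2) ^+ r.
Proof.
move=> a0 b0 rk; rewrite edge_mean_central // ler_pdivrMr ?ltr0n ?bin_gt0; last first.
  by rewrite -addnn leq_addl.
by rewrite mulrC urn_poly_central_le // (leq_trans rk (leq_uphalf_double k)).
Qed.

Lemma edge_mean_eq a b k r : (r <= 1)%N -> (r <= k)%N ->
  edge_mean a b k r = ((a + b) / 2) ^+ r.
Proof.
move=> r1 rk; rewrite edge_mean_central // urn_poly_central_eq //; last first.
  exact: leq_trans rk (leq_uphalf_double k).
by rewrite mulrAC divff ?mul1r // pnatr_eq0 -lt0n bin_gt0 -addnn leq_addl.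
Qed.
End UrnPolynomial.

Section BlockSums.
Variables (I J K : finType) (R : comPzSemiRingType).
Variables (Q : I -> pred J) (d : I -> J) (blk : I -> K).

Definition block_family (k : K) : I -> pred J :=
  fun i => [pred v | if blk i == k then Q i v else v == d i].

Definition restrict_block (f : {ffun I -> J}) (k : K) : {ffun I -> J} :=
  [ffun i => if blk i == k then f i else d i].

Definition glue_blocks (g : {ffun K -> {ffun I -> J}}) : {ffun I -> J} :=
  [ffun i => g (blk i) i].

Lemma glue_restrict_block f : glue_blocks [ffun k => restrict_block f k] = f.
Proof. by apply/ffunP => i; rewrite !ffunE eqxx. Qed.

Lemma restrict_block_family f k :
  f \in family Q -> restrict_block f k \in family (block_family k).
Proof.
move=> /familyP fQ; apply/familyP => i; rewrite inE ffunE.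
by case: (blk i == k) => //; exact: fQ.
Qed.

Lemma glue_blocks_family g : g \in family (fun k => family (block_family k)) ->
  glue_blocks g \in family Q /\ [ffun k => restrict_block (glue_blocks g) k] = g.
Proof.
move=> /familyP gB; split.
  apply/familyP => i; rewrite ffunE.
  by have /familyP/(_ i) := gB (blk i); rewrite inE eqxx.
apply/ffunP => k; apply/ffunP => i; rewrite !ffunE; case: eqP => [<- //|/eqP ik].
by have /familyP/(_ i) := gB k; rewrite inE (negbTE ik) => /eqP ->.
Qed.

Lemma sum_family_prod_blocks (F : K -> {ffun I -> J} -> R) :
  (forall k (f g : {ffun I -> J}), (forall i, blk i = k -> f i = g i) -> F k f = F k g) ->
  \sum_(f in family Q) \prod_k F k f =
  \prod_k \sum_(f in family (block_family k)) F k f.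
Proof.
move=> Floc; rewrite bigA_distr_big_dep /=.
rewrite (reindex_onto glue_blocks (fun f => [ffun k => restrict_block f k])) /=;
  last by move=> f _; exact: glue_restrict_block.
apply: eq_big => [g|g gB].
  apply/andP/idP => [[fQ /eqP <-]|gB]; last first.
    by have [-> ->] := glue_blocks_family gB; rewrite eqxx.
  by apply/familyP => k; rewrite ffunE restrict_block_family.
by apply: eq_bigr => k _; apply: Floc => i <-; rewrite ffunE.
Qed.

End BlockSums.

Lemma match_mx_mulE (R : fieldType) n (mate : {ffun 'I_n -> 'I_n}) (v : 'cV[R]_n) x :
  (match_mx R mate *m v) x 0 =
  if mate x == x then v x 0 else (v x 0 + v (mate x) 0) / 2.
Proof.
rewrite mxE; under eq_bigr do rewrite mxE.
case: eqP => [_|/eqP mx].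
  rewrite (bigD1 x) //= eqxx mul1r big1 ?addr0 // => y /negbTE.
  by rewrite eq_sym => ->; rewrite mul0r.
rewrite (bigD1 x) //= eqxx (bigD1 (mate x)) //= eqxx orbT big1 ?addr0.
  by rewrite mulrDl; congr (_ + _); apply: mulrC.
by move=> y /andP[/negbTE -> /negbTE ->]; rewrite mul0r.
Qed.

Lemma match_mx_ge0 (R : realFieldType) n (mate : {ffun 'I_n -> 'I_n}) x y :
  0 <= match_mx R mate x y.
Proof. by rewrite mxE; case: ifP => _; [|case: ifP => _]; rewrite ?invr_ge0 ?ler0n. Qed.

Lemma edge_prob_ge0 (R : realFieldType) m n (mate : {ffun 'I_n -> 'I_n})
    (w f : config m n) u :
  0 <= edge_prob R mate w f u.
Proof. by rewrite /edge_prob addr_ge0 ?divr_ge0 ?ler0n. Qed.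

Lemma step_prob_ge0 (R : realFieldType) m n (mate : {ffun 'I_n -> 'I_n})
    (w f : config m n) :
  0 <= step_prob R mate w f.
Proof.
by rewrite /step_prob; case: ifP => // _; apply: prodr_ge0 => u _; apply: edge_prob_ge0.
Qed.

Section OneRound.
Variables (R : realFieldType) (n m : nat) (mate : {ffun 'I_n -> 'I_n}).
Hypothesis mateK : involutive mate.
Variables (w : config m n) (B : {set 'I_m}) (v : 'cV[R]_n).
Implicit Types (u : 'I_n) (i : 'I_m).

Definition token_dests (i : 'I_m) : pred 'I_n :=
  [pred x | (x == w i) || (x == mate (w i))].

(* The edge {u, mate u} carrying token i, named by its smaller endpoint (the
   node of token i if that node is unmatched). *)
Definition edge_of (i : 'I_m) : 'I_n :=
  if (mate (w i) < w i)%N then mate (w i) else w i.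

Definition on_edge (u : 'I_n) : {set 'I_m} := [set i | (w i == u) || (w i == mate u)].

Lemma in_on_edge u i : (u < mate u)%N -> (i \in on_edge u) = (edge_of i == u).
Proof.
move=> lt_u; rewrite inE /edge_of.
have [->|ne_u] := eqVneq (w i) u; first by rewrite ltnNge ltnW // eqxx.
have [->|ne_mu] := eqVneq (w i) (mate u); first by rewrite mateK lt_u eqxx.
rewrite /=; case: ifP => _; last by rewrite (negbTE ne_u).
by apply/esym/negbTE; apply: contra ne_mu => /eqP <-; rewrite mateK.
Qed.

Lemma edge_of_unmatched u i : ~~ (u < mate u)%N -> edge_of i = u -> mate (w i) = w i.
Proof.
rewrite /edge_of -leqNgt => le_u.
case: ltnP => [lt_i|le_i] eq_i; rewrite -eq_i in le_u.
  by rewrite mateK leqNgt lt_i in le_u.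
by apply/val_inj/eqP; rewrite eqn_leq le_u le_i.
Qed.

Definition block_weight u (f : config m n) : R :=
  (if (u < mate u)%N then edge_prob R mate w f u else 1) *
  \prod_(i in B | edge_of i == u) v (f i) 0.

Section MatchedEdge.
Variable u : 'I_n.
Hypothesis lt_u : (u < mate u)%N.

(* Generating polynomial of a token: [X] marks the tokens that end up at [u]. *)
Definition token_weight i (x : 'I_n) : {poly R} :=
  if edge_of i == u then (if x == u then 'X else 1) * (if i \in B then v x 0 else 1)%:P
  else 1.

Lemma token_weight_prod (f : config m n) :
  \prod_i token_weight i (f i) =
  'X ^+ #|[set i in on_edge u | f i == u]| *
  (\prod_(i in B | edge_of i == u) v (f i) 0)%:P.
Proof.
rewrite /token_weight -big_mkcond big_split /=; congr (_ * _).
  rewrite -big_mkcondr -prodr_const; apply: eq_bigl => i.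
  by rewrite inE in_on_edge.
by rewrite -rmorph_prod -big_mkcondr; congr _%:P; apply: eq_bigl => i; rewrite andbC.
Qed.

Lemma mate_neq : mate u != u.
Proof. by apply: contraTneq lt_u => ->; rewrite ltnn. Qed.

Lemma sum_token_weight i :
  \sum_(x | block_family token_dests w edge_of u i x) token_weight i x =
  if edge_of i == u then
    token_poly (if i \in B then v u 0 else 1) (if i \in B then v (mate u) 0 else 1)
  else 1.
Proof.
rewrite /block_family /token_weight.
case: eqP => [ei|_]; last by rewrite (big_pred1 (w i)).
have dests_i x : token_dests i x = (x == u) || (x == mate u).
  have : i \in on_edge u by rewrite in_on_edge // ei.
  by rewrite inE /token_dests /= => /orP[] /eqP ->; rewrite ?mateK // orbC.
have ne_u := negbTE mate_neq; rewrite eq_sym in ne_u.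
rewrite (eq_bigl _ _ dests_i) (bigD1 u) ?eqxx //= (big_pred1 (mate u)) => [|x].
  by rewrite eq_sym ne_u mul1r.
by case: (eqVneq x u) => [->|_] /=; rewrite ?eqxx ?ne_u ?andbT.
Qed.

Lemma token_weight_sum :
  \prod_i \sum_(x | block_family token_dests w edge_of u i x) token_weight i x =
  urn_poly (v u 0) (v (mate u) 0) #|on_edge u :&: B| (#|on_edge u| - #|on_edge u :&: B|).
Proof.
rewrite (eq_bigr _ (fun i _ => sum_token_weight i)) -big_mkcond (bigID (mem B)) /=.
congr (_ * _).
  rewrite -prodr_const; apply: eq_big => [i|i /andP[_ ->]] //.
  by rewrite in_setI in_on_edge.
rewrite -cardsD -prodr_const; apply: eq_big => [i|i /andP[_ /negbTE ->]] //.
by rewrite in_setD in_on_edge // andbC.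
Qed.

Lemma block_expect_matched :
  \sum_(f in family (block_family token_dests w edge_of u)) block_weight u f =
  edge_mean (v u 0) (v (mate u) 0) #|on_edge u| #|on_edge u :&: B|.
Proof.
set k := #|on_edge u|.
pose Phi (f : config m n) := \prod_i token_weight i (f i).
have coefE c f : (Phi f)`_c =
    (#|[set i in on_edge u | f i == u]| == c)%:R *
    \prod_(i in B | edge_of i == u) v (f i) 0.
  by rewrite /Phi token_weight_prod coefMC coefXn eq_sym.
rewrite (eq_bigr (fun f => (Phi f)`_(uphalf k) / 2 / 'C(k, uphalf k)%:R +
                           (Phi f)`_(k./2) / 2 / 'C(k, k./2)%:R)); last first.
  by move=> f _; rewrite /block_weight lt_u /edge_prob /= !coefE; ring.
rewrite big_split /= -!mulr_suml -!coef_sum /Phi.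
by rewrite -!(bigA_distr_big_dep _ token_weight) token_weight_sum.
Qed.

Lemma block_mean_matched :
  \prod_(i in B | edge_of i == u) (match_mx R mate *m v) (w i) 0 =
  ((v u 0 + v (mate u) 0) / 2) ^+ #|on_edge u :&: B|.
Proof.
have ne_u := negbTE mate_neq.
rewrite -prodr_const; apply: eq_big => [i|i /andP[_ ei]].
  by rewrite in_setI in_on_edge // andbC.
have : i \in on_edge u by rewrite in_on_edge.
rewrite match_mx_mulE inE => /orP[] /eqP ->; first by rewrite ne_u.
by rewrite mateK eq_sym ne_u addrC.
Qed.

End MatchedEdge.


Lemma block_expect_unmatched u : ~~ (u < mate u)%N ->
  \sum_(f in family (block_family token_dests w edge_of u)) block_weight u f =
  \prod_(i in B | edge_of i == u) (match_mx R mate *m v) (w i) 0.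
Proof.
move=> nlt_u; rewrite (big_pred1 w) => [|f].
  rewrite /block_weight (negbTE nlt_u) mul1r; apply: eq_bigr => i /andP[_ /eqP ei].
  by rewrite match_mx_mulE (edge_of_unmatched nlt_u ei) eqxx.
apply/familyP/eqP => [fB|-> i].
  apply/ffunP => i; have := fB i; rewrite inE; case: eqP => [ei|_] /=; last by move/eqP.
  by rewrite /token_dests /= (edge_of_unmatched nlt_u ei) orbb => /eqP.
by rewrite inE /token_dests; case: ifP => _; rewrite /= eqxx.
Qed.

Lemma block_weight_local u (f g : config m n) :
  (forall i, edge_of i = u -> f i = g i) -> block_weight u f = block_weight u g.
Proof.
move=> fg; rewrite /block_weight; congr (_ * _); last first.
  by apply: eq_bigr => i /andP[_ /eqP ei]; rewrite fg.
case: ifP => // lt_u.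
have eS : [set i in on_edge u | f i == u] = [set i in on_edge u | g i == u].
  apply/setP => i; rewrite !inE.
  case: (eqVneq (edge_of i) u) => [ei|]; first by rewrite fg.
  by rewrite -in_on_edge // inE => /negbTE ->.
by rewrite /edge_prob /= eS.
Qed.

Lemma step_expect_blocks :
  \sum_(f : config m n) step_prob R mate w f * \prod_(i in B) v (f i) 0 =
  \prod_u \sum_(f in family (block_family token_dests w edge_of u)) block_weight u f.
Proof.
rewrite -sum_family_prod_blocks; last exact: block_weight_local.
rewrite [RHS]big_mkcond; apply: eq_bigr => f _; rewrite /step_prob.
have -> : [forall i, (f i == w i) || (f i == mate (w i))] = (f \in family token_dests).
  exact/forallP/familyP.
case: (f \in _); last by rewrite mul0r.
rewrite /block_weight big_split /= -big_mkcond /=; congr (_ * _).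
by rewrite (partition_big edge_of predT).
Qed.

Lemma block_expect_ge0 u : (forall x, 0 <= v x 0) ->
  0 <= \sum_(f in family (block_family token_dests w edge_of u)) block_weight u f.
Proof.
move=> v0; apply: sumr_ge0 => f _; rewrite mulr_ge0 ?prodr_ge0 //.
by case: ifP => _; rewrite ?edge_prob_ge0.
Qed.

Lemma step_expect_prod_le : (forall x, 0 <= v x 0) ->
  \sum_(f : config m n) step_prob R mate w f * \prod_(i in B) v (f i) 0 <=
  \prod_(i in B) (match_mx R mate *m v) (w i) 0.
Proof.
move=> v0; rewrite step_expect_blocks (partition_big edge_of predT) //=.
apply: ler_prod => u _; rewrite block_expect_ge0 //=.
have [lt_u|nlt_u] := boolP (u < mate u)%N; last by rewrite block_expect_unmatched.
rewrite block_expect_matched // block_mean_matched // edge_mean_le //.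
exact/subset_leq_card/subsetIl.
Qed.

Lemma step_expect_prod_eq : (#|B| <= 1)%N ->
  \sum_(f : config m n) step_prob R mate w f * \prod_(i in B) v (f i) 0 =
  \prod_(i in B) (match_mx R mate *m v) (w i) 0.
Proof.
move=> B1; rewrite step_expect_blocks (partition_big edge_of predT) //=.
apply: eq_bigr => u _.
have [lt_u|nlt_u] := boolP (u < mate u)%N; last by rewrite block_expect_unmatched.
rewrite block_expect_matched // block_mean_matched // edge_mean_eq //.
  exact: leq_trans (subset_leq_card (subsetIr _ _)) B1.
exact/subset_leq_card/subsetIl.
Qed.
End OneRound.

HB.instance Definition _ (R : pzSemiRingType) (n : nat) :=
  Monoid.isLaw.Build 'M[R]_n 1%:M mulmx
    (@mulmxA R n n n n) (@mul1mx R n n) (@mulmx1 R n n).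

Lemma match_prod_nil (R : fieldType) n (Ms : nat -> {ffun 'I_n -> 'I_n}) a :
  match_prod R Ms a.+1 a = 1%:M.
Proof. by rewrite /match_prod big_geq. Qed.

Lemma match_prodSr (R : fieldType) n (Ms : nat -> {ffun 'I_n -> 'I_n}) a b :
  (a <= b.+1)%N ->
  match_prod R Ms a b.+1 = match_prod R Ms a b *m match_mx R (Ms b.+1).
Proof. by move=> ab; rewrite /match_prod big_nat_recr. Qed.

Lemma match_mx_mul_ge0 (R : realFieldType) n (mate : {ffun 'I_n -> 'I_n}) (v : 'cV[R]_n) :
  (forall x, 0 <= v x 0) -> forall x, 0 <= (match_mx R mate *m v) x 0.
Proof.
by move=> v0 x; rewrite mxE; apply: sumr_ge0 => y _; rewrite mulr_ge0 ?match_mx_ge0.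
Qed.

Section Process.
Variables (R : realFieldType) (n m : nat) (Ms : nat -> {ffun 'I_n -> 'I_n}).
Hypothesis MsK : forall t, involutive (Ms t).
Variables (t1 : nat) (w0 : config m n).

Lemma proc_dist_ge0 k w : 0 <= proc_dist R Ms t1 k w0 w.
Proof.
elim: k w => [|k IHk] w /=; rewrite ffunE ?ler0n //.
by apply: sumr_ge0 => w' _; rewrite mulr_ge0 ?step_prob_ge0.
Qed.

Lemma proc_expect0 (g : config m n -> R) :
  \sum_w proc_dist R Ms t1 0 w0 w * g w = g w0.
Proof.
rewrite (bigD1 w0) //= ffunE eqxx mul1r big1 ?addr0 // => w /negbTE w_w0.
by rewrite ffunE w_w0 mul0r.
Qed.

Lemma proc_expectS k (g : config m n -> R) :
  \sum_w proc_dist R Ms t1 k.+1 w0 w * g w =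
  \sum_w proc_dist R Ms t1 k w0 w * \sum_f step_prob R (Ms (t1 + k.+1)%N) w f * g f.
Proof.
under eq_bigr do rewrite ffunE mulr_suml.
rewrite exchange_big; apply: eq_bigr => w _; rewrite mulr_sumr.
by apply: eq_bigr => f _; rewrite mulrA.
Qed.

Lemma proc_expect_prod_le (B : {set 'I_m}) k (v : 'cV[R]_n) : (forall x, 0 <= v x 0) ->
  \sum_w proc_dist R Ms t1 k w0 w * \prod_(i in B) v (w i) 0 <=
  \prod_(i in B) (match_prod R Ms t1.+1 (t1 + k) *m v) (w0 i) 0.
Proof.
elim: k v => [|k IHk] v v0.
  by rewrite proc_expect0 addn0 match_prod_nil mul1mx.
rewrite proc_expectS addnS match_prodSr ?ltnS ?leq_addr // -mulmxA.
apply: le_trans (IHk _ (match_mx_mul_ge0 _ v0)).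
apply: ler_sum => w _; rewrite ler_wpM2l ?proc_dist_ge0 //.
exact: step_expect_prod_le.
Qed.

Lemma proc_expect_prod_eq (B : {set 'I_m}) k (v : 'cV[R]_n) : (#|B| <= 1)%N ->
  \sum_w proc_dist R Ms t1 k w0 w * \prod_(i in B) v (w i) 0 =
  \prod_(i in B) (match_prod R Ms t1.+1 (t1 + k) *m v) (w0 i) 0.
Proof.
move=> B1; elim: k v => [|k IHk] v.
  by rewrite proc_expect0 addn0 match_prod_nil mul1mx.
rewrite proc_expectS addnS match_prodSr ?ltnS ?leq_addr // -mulmxA -IHk.
by apply: eq_bigr => w _; rewrite step_expect_prod_eq.
Qed.
End Process.

Definition indicator_col (R : nzRingType) n (D : {set 'I_n}) : 'cV[R]_n :=
  \col_x (x \in D)%:R.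

Lemma indicator_col_ge0 (R : realFieldType) n (D : {set 'I_n}) x :
  0 <= indicator_col R D x 0.
Proof. by rewrite mxE ler0n. Qed.

Lemma mx_row_setE (R : fieldType) n (A : 'M[R]_n) u (D : {set 'I_n}) :
  mx_row_set A u D = (A *m indicator_col R D) u 0.
Proof.
rewrite /mx_row_set mxE big_mkcond; apply: eq_bigr => x _.
by rewrite mxE; case: (x \in D); rewrite ?mulr1 ?mulr0.
Qed.

Lemma Pr_atE (R : realFieldType) n m (Ms : nat -> {ffun 'I_n -> 'I_n}) t1 t2 w0
    (E : pred (config m n)) :
  Pr_at R Ms t1 t2 w0 E = \sum_w proc_dist R Ms t1 (t2 - t1) w0 w * (E w)%:R.
Proof.
rewrite /Pr_at big_mkcond; apply: eq_bigr => w _.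
by case: (E w); rewrite ?mulr1 ?mulr0.
Qed.

Lemma forall_in_indicatorE (R : comNzRingType) m n (B : {set 'I_m}) (D : {set 'I_n})
    (w : config m n) :
  [forall i in B, w i \in D]%:R = \prod_(i in B) indicator_col R D (w i) 0.
Proof.
case: (boolP [forall i in B, w i \in D]) => [/forall_inP wD|/forall_inPn[i iB wiD]].
  by rewrite big1 // => i iB; rewrite mxE wD.
by rewrite (bigD1 i) //= mxE (negbTE wiD) mul0r.
Qed.

Unset Implicit Arguments.

Theorem lemma3p2 (R : realFieldType) (n m : nat) (G : rel 'I_n)
  (Ms : nat -> {ffun 'I_n -> 'I_n})
  (hG : is_graph G) (hM : forall t, is_matching G (Ms t))
  (w0 : config m n) (B : {set 'I_m}) (D : {set 'I_n}) (t1 t2 : nat)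
  (ht : (t1 < t2)%N) :
  Pr_at R Ms t1 t2 w0 (fun w => [forall i in B, w i \in D])
    <= \prod_(i in B) mx_row_set (match_prod R Ms t1.+1 t2) (w0 i) D
  /\ \prod_(i in B) mx_row_set (match_prod R Ms t1.+1 t2) (w0 i) D
     = \prod_(i in B) Pr_at R Ms t1 t2 w0 (fun w => w i \in D).
Proof.
have MsK t : involutive (Ms t) by move=> u; case: (hM t u).
have t2E : t2 = (t1 + (t2 - t1))%N by rewrite subnKC // ltnW.
split.
  rewrite Pr_atE /=; under eq_bigr do rewrite forall_in_indicatorE.
  under [X in _ <= X]eq_bigr do rewrite mx_row_setE {1}t2E.
  exact: (proc_expect_prod_le MsK t1 w0 B (t2 - t1) (indicator_col_ge0 R D)).
apply: eq_bigr => i _; rewrite mx_row_setE {1}t2E Pr_atE.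
have := proc_expect_prod_eq MsK t1 w0 (t2 - t1) (indicator_col R D) (eq_leq (cards1 i)).
rewrite big_set1 => <-; apply: eq_bigr => w _.
by rewrite big_set1 mxE.
Qed.
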